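(* Let $N=p^n$ with $p\ge5$ prime and $n\ge2$. Let $\mathbf{s}$ be a Zadoff–Chu sequence of length $N$ and let $\pi(x)=f_2x^2+f_1x+f_0$ be a quadratic permutation polynomial over $\mathbb{Z}_N$ (with $f_2\ne0$ in $\mathbb{Z}_N$). Then the CAZAC sequences $\mathbf{s}\circ\pi$ and $\mathbf{s}\circ\pi^{-1}$ are both inequivalent to ZC sequences, i.e., neither lies in the equivalence class of any Zadoff–Chu sequence of length $N$.
   Context: $\xi_N=e^{-2\pi\sqrt{-1}/N}$, $\xi_N^{x/2}=e^{-\pi\sqrt{-1}x/N}$. A Zadoff–Chu sequence of length $N$ is $s(k)=\xi_N^{u(k^2+(N\bmod2)k+2lk)/2}$, $0\le k<N$, with $\gcd(u,N)=1$, $l$ an integer. A permutation polynomial over $\mathbb{Z}_N$ induces a bijection $k\mapsto \pi(k)\bmod N$ of $\mathbb{Z}_N$; $\pi^{-1}$ is the inverse permutation; $(\mathbf{s}\circ\sigma)(k)=s(\sigma(k))$. The equivalence class of a length-$N$ sequence $\mathbf{x}$ is the set of all sequences obtained from $\mathbf{x}$ by composing the operations: rotation $y(k)=c\,x(k)$ with $|c|=1$; translation $y(k)=x(k+d\bmod N)$ for an integer $d$; decimation $y(k)=x(ak\bmod N)$ with $\gcd(a,N)=1$; linear frequency modulation $y(k)=\xi_N^{lk}x(k)$ for an integer $l$; conjugation $y(k)=x^*(k)$. *)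

From HB Require Import structures.
From mathcomp Require Import all_boot all_order all_algebra.
From mathcomp Require Import complex.
From mathcomp Require Import reals trigo.

Set Implicit Arguments.
Unset Strict Implicit.
Unset Printing Implicit Defensive.

Import Order.TTheory GRing.Theory Num.Theory.
Local Open Scope ring_scope.
Local Open Scope complex_scope.

Section ZC.
Variable R : realType.
Local Notation C := R[i].

Definition expi (t : R) : C := (cos t +i* sin t)%C.

(* xi_N^{x/2} = e^{- pi sqrt(-1) x / N}, for an integer x *)
Definition xi_half (N : nat) (x : int) : C :=
  expi (- (pi * x%:~R / N%:R)).

Definition xi_pow (N : nat) (x : int) : C := xi_half N (2 * x).

(* a sequence of length N is represented by a function nat -> C;
   only its values at 0 <= k < N matter *)
Definition seq_eq (N : nat) (x y : nat -> C) : Prop :=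
  forall k : nat, (k < N)%N -> x k = y k.

Definition zmodN (N : nat) (z : int) : nat := absz (z %% N%:Z)%Z.

Definition zc_seq (N : nat) (u l : int) : nat -> C :=
  fun k => xi_half N (u * ((k%:Z) ^+ 2 + (N %% 2)%:Z * k%:Z + 2 * l * k%:Z)).

Definition is_ZC (N : nat) (s : nat -> C) : Prop :=
  exists u l : int, coprimez u N%:Z /\ seq_eq N s (zc_seq N u l).

Definition elem_op (N : nat) (x y : nat -> C) : Prop :=
     (exists c : C, `|c| = 1 /\ seq_eq N y (fun k => c * x k))
  \/ (exists d : int, seq_eq N y (fun k => x (zmodN N (k%:Z + d))))
  \/ (exists a : int, coprimez a N%:Z /\
                      seq_eq N y (fun k => x (zmodN N (a * k%:Z))))
  \/ (exists l : int, seq_eq N y (fun k => xi_pow N (l * k%:Z) * x k))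
  \/ seq_eq N y (fun k => (x k)^*).

Inductive in_class (N : nat) (x : nat -> C) : (nat -> C) -> Prop :=
  | in_class_refl y : seq_eq N x y -> in_class N x y
  | in_class_step y z : in_class N x y -> elem_op N y z -> in_class N x z.

End ZC.

Definition quad_val (f2 f1 f0 : int) (k : nat) : int :=
  (f2 * (k%:Z) ^+ 2 + f1 * k%:Z + f0)%R.

Definition is_perm_poly (N : nat) (f2 f1 f0 : int) : Prop :=
  (forall i j : nat, (i < N)%N -> (j < N)%N ->
     zmodN N (quad_val f2 f1 f0 i) = zmodN N (quad_val f2 f1 f0 j) -> i = j)
  /\ (forall k : nat, (k < N)%N -> exists j : nat, (j < N)%N /\ zmodN N (quad_val f2 f1 f0 j) = k).

From HB Require Import structures.
From mathcomp Require Import all_boot all_order all_algebra.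
From mathcomp Require Import complex.
From mathcomp Require Import reals trigo.
From mathcomp Require Import ring lra zify.

Set Implicit Arguments.
Unset Strict Implicit.
Unset Printing Implicit Defensive.

Import Order.TTheory GRing.Theory Num.Theory.
Local Open Scope ring_scope.

(* Every sequence in the equivalence class of a Zadoff-Chu sequence of odd
   length N is a chirp c * xi_N^(a k^2 + b k) with c <> 0 and a coprime to N:
   ZC sequences are chirps because 2 is invertible mod N, and every elementary
   operation maps chirps to chirps.  If both y and y o pi were chirps, then
   xi_N^D would be constant for the quartic
   D(k) = a pi(k)^2 + b pi(k) - a' k^2 - b' k, so N divides every third
   difference of D, namely 12 a f2 ((2k + 3) f2 + f1).  Taking k = 0, 1 and
   using p >= 5 gives N | f2^2 and N | f2 f1, hence p | f2 and p | f1 because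
   N does not divide f2; but then pi is constant mod p and cannot permute Z_N.
   For y o pi^-1 the same argument runs with the two chirps exchanged, after
   substituting k = pi(j). *)

Section ZmodN.
Variable N : nat.
Hypothesis N_gt0 : (0 < N)%N.

Lemma zmodN_def z : (zmodN N z)%:Z = (z %% N%:Z)%Z.
Proof. by rewrite /zmodN gez0_abs // modz_ge0 // eqz_nat -lt0n. Qed.

Lemma zmodN_lt z : (zmodN N z < N)%N.
Proof. by rewrite -ltz_nat zmodN_def ltz_pmod // ltz_nat. Qed.

Lemma dvdz_zmodN_sub z : (N%:Z %| (zmodN N z)%:Z - z)%Z.
Proof. by rewrite -eqz_mod_dvd zmodN_def modz_mod. Qed.

Lemma zmodN_eq0 z : (N%:Z %| z)%Z -> zmodN N z = 0%N.
Proof. by move=> /dvdz_mod0P z0; rewrite /zmodN z0. Qed.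

End ZmodN.

Definition diff3 (D : nat -> int) (k : nat) : int :=
  D k.+3 - 3 * D k.+2 + 3 * D k.+1 - D k.

Lemma diff3_quad_comp (f2 f1 f0 a b a' b' : int) k :
  let q := quad_val f2 f1 f0 in
  diff3 (fun j => a * q j ^+ 2 + b * q j - (a' * j%:Z ^+ 2 + b' * j%:Z)) k
  = 12 * a * f2 * ((2 * k%:Z + 3) * f2 + f1).
Proof. by rewrite /diff3 /quad_val !intS; ring. Qed.

Section XiPow.
Variable R : realType.
Local Notation C := R[i].

Lemma expiD (a b : R) : expi (a + b) = expi a * expi b.
Proof. by rewrite /expi cosD sinD /=; congr Complex; ring. Qed.

Lemma conj_expi (a : R) : ((expi a)^*)%C = expi (- a).
Proof. by rewrite /expi /= cosN sinN. Qed.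

Variable N : nat.
Hypothesis N_gt0 : (0 < N)%N.
Local Notation xi := (xi_pow R N).

Lemma xi_powD x y : xi (x + y) = xi x * xi y.
Proof. by rewrite /xi_pow /xi_half -expiD; congr expi; rewrite mulrDr !intrD; ring. Qed.

Lemma xi_pow0 : xi 0 = 1.
Proof. by rewrite /xi_pow /xi_half /expi !(mulr0, mul0r, oppr0, cos0, sin0). Qed.

Lemma mul_xi_powN x : xi x * xi (- x) = 1.
Proof. by rewrite -xi_powD subrr xi_pow0. Qed.

Lemma xi_pow_neq0 x : xi x != 0.
Proof. by apply: contra_eq_neq (mul_xi_powN x) => ->; rewrite mul0r eq_sym oner_neq0. Qed.

Lemma conj_xi_pow x : ((xi x)^*)%C = xi (- x).
Proof. by rewrite /xi_pow /xi_half conj_expi; congr expi; rewrite !intrM intrN; ring. Qed.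

Lemma xi_pow_N : xi N = 1.
Proof.
have N_neq0 : (N%:R : R) != 0 by rewrite pnatr_eq0 -lt0n.
rewrite /xi_pow /xi_half /expi.
have -> : pi * (2 * N%:Z)%:~R / N%:R = pi *+ 2 :> R.
  by rewrite intrM mulrz_nat; field.
by rewrite cosN sinN cos2pi sin2pi oppr0.
Qed.

Lemma xi_pow_Nmul m : xi (N%:Z * m) = 1.
Proof.
have xi_pow_Nmul_nat k : xi (N%:Z * k%:Z) = 1.
  elim: k => [|k IHk]; first by rewrite mulr0 xi_pow0.
  by rewrite intS mulrDr mulr1 xi_powD xi_pow_N IHk mul1r.
case: m => k; first exact: xi_pow_Nmul_nat.
by have := mul_xi_powN (N%:Z * k.+1%:Z); rewrite xi_pow_Nmul_nat mul1r NegzE mulrN.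
Qed.

Lemma xi_pow_neq1 r : 0 < r < N%:Z -> xi r != 1.
Proof.
move=> /andP[r_gt0 r_ltN]; apply/eqP => /(congr1 (@complex.Re R)) /=.
set y : R := pi * r%:~R / N%:R.
have -> : pi * (2 * r)%:~R / N%:R = y *+ 2 by rewrite /y intrM mulr2n; ring.
have y_bounds : 0 < y < pi.
  have N_gt0R : (0 : R) < N%:R by rewrite ltr0n.
  rewrite divr_gt0 ?mulr_gt0 ?pi_gt0 ?ltr0z //=.
  by rewrite ltr_pdivrMr // ltr_pM2l ?pi_gt0 // -mulrz_nat ltr_int natz.
have := sin_gt0_pi y_bounds.
rewrite cosN cos_mulr2n cos2sin2 => sin_gt0; nra.
Qed.

Lemma xi_pow_eq1 x : xi x = 1 <-> (N%:Z %| x)%Z.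
Proof.
split; last by move=> /dvdzP[q ->]; rewrite mulrC xi_pow_Nmul.
have N_neq0 : N%:Z != 0 by rewrite eqz_nat -lt0n.
rewrite {1}(divz_eq x N%:Z) xi_powD [(x %/ N%:Z)%Z * _]mulrC xi_pow_Nmul mul1r => xi_mod.
apply/dvdz_mod0P; have [// | mod_neq0] := eqVneq (x %% N%:Z)%Z 0.
move/eqP: xi_mod; rewrite (negPf (xi_pow_neq1 _)) //.
by rewrite lt_def mod_neq0 modz_ge0 //= ltz_pmod // ltz_nat.
Qed.

Lemma eq_xi_pow x y : xi x = xi y <-> (N%:Z %| x - y)%Z.
Proof.
have -> : xi x = xi (x - y) * xi y by rewrite -xi_powD subrK.
rewrite -xi_pow_eq1 -{2}(mul1r (xi y)).
by split=> [/(mulIf (xi_pow_neq0 y)) | ->].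
Qed.

Lemma xi_pow_quad_congr (a b m z : int) : (N%:Z %| m - z)%Z ->
  xi (a * m ^+ 2 + b * m) = xi (a * z ^+ 2 + b * z).
Proof.
move=> mz; apply/eq_xi_pow.
have -> : a * m ^+ 2 + b * m - (a * z ^+ 2 + b * z) = (a * (m + z) + b) * (m - z) by ring.
exact: dvdz_mull.
Qed.

Lemma xi_powB_eq (c c' : C) x y : c != 0 ->
  c * xi x = c' * xi y -> xi (x - y) = c' / c.
Proof.
move=> c_neq0 E; apply: (mulfI c_neq0).
by rewrite xi_powD mulrA E -mulrA mul_xi_powN mulr1 mulrC divfK.
Qed.

Lemma const_xi_pow_diff3 (D : nat -> int) (c : C) k : (k.+3 < N)%N ->
  (forall j, (j < N)%N -> xi (D j) = c) -> (N%:Z %| diff3 D k)%Z.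
Proof.
move=> k3_lt Dc.
have D_congr j : (j < N)%N -> (N%:Z %| D j - D k)%Z.
  by move=> j_lt; apply/eq_xi_pow; rewrite !Dc //; lia.
have -> : diff3 D k = (D k.+3 - D k) - 3 * (D k.+2 - D k) + 3 * (D k.+1 - D k).
  by rewrite /diff3; ring.
by apply: rpredD; [apply: rpredB|]; rewrite ?dvdz_mull ?D_congr //; lia.
Qed.

Definition is_chirp (y : nat -> C) : Prop :=
  exists c a b, [/\ c != 0, coprimez a N%:Z &
    forall k, (k < N)%N -> y k = c * xi (a * k%:Z ^+ 2 + b * k%:Z)].

Lemma chirp_seq_eq y z : is_chirp y -> seq_eq N y z -> is_chirp z.
Proof.
move=> [c [a [b [c_neq0 a_coprime yE]]]] yz.
by exists c, a, b; split=> // k k_lt; rewrite -yz ?yE.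
Qed.

Lemma chirp_elem_op y z : is_chirp y -> elem_op N y z -> is_chirp z.
Proof.
move=> [c [a [b [c_neq0 a_coprime yE]]]].
case=> [[c0 [c0_norm zE]] | [[d zE] | [[a0 [a0_coprime zE]] | [[l0 zE] | zE]]]].
- exists (c0 * c), a, b; split=> // [|k k_lt].
    by rewrite mulf_neq0 // -normr_eq0 c0_norm oner_neq0.
  by rewrite zE // yE // mulrA.
- exists (c * xi (a * d ^+ 2 + b * d)), a, (2 * a * d + b).
  split => [||k k_lt]; [by rewrite mulf_neq0 ?xi_pow_neq0 | by [] |].
  rewrite zE // yE ?zmodN_lt // (xi_pow_quad_congr _ _ (dvdz_zmodN_sub _ _)) //.
  by rewrite -mulrA -xi_powD; congr (_ * xi _); ring.
- exists c, (a * a0 ^+ 2), (b * a0); split => [||k k_lt] //.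
    by rewrite coprimezMl a_coprime coprimezXl.
  rewrite zE // yE ?zmodN_lt // (xi_pow_quad_congr _ _ (dvdz_zmodN_sub _ _)) //.
  by congr (_ * xi _); ring.
- exists c, a, (b + l0); split => [||k k_lt] //.
  by rewrite zE // yE // mulrCA -xi_powD; congr (_ * xi _); ring.
- exists (c^*)%C, (- a), (- b); split => [||k k_lt].
  + by rewrite conjc_eq0.
  + by rewrite coprimeNz.
  rewrite zE // yE //.
  have -> : - a * k%:Z ^+ 2 + - b * k%:Z = - (a * k%:Z ^+ 2 + b * k%:Z) by ring.
  by rewrite -conj_xi_pow; apply: rmorphM.
Qed.

Lemma in_class_chirp x y : is_chirp x -> in_class N x y -> is_chirp y.
Proof.
move=> x_chirp; elim=> [z xz | z z' _ z_chirp]; first exact: chirp_seq_eq xz.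
exact: chirp_elem_op.
Qed.

Lemma zc_seq_chirp u l : odd N -> coprimez u N%:Z -> is_chirp (zc_seq R N u l).
Proof.
move=> N_odd u_coprime.
pose h : int := (N./2).+1.
have two_h : 2 * h = N%:Z + 1.
  have := odd_double_half N; rewrite N_odd -muln2 /h => N_half.
  by rewrite -[2]/(2%N%:Z) -PoszM -PoszD; congr Posz; lia.
exists 1, (h * u), (h * u + u * l); split => [||k _]; first exact: oner_neq0.
  rewrite coprimezMl u_coprime andbT.
  by apply/coprimezP; exists (2, -1) => /=; rewrite two_h; ring.
have [T k_triangle] : exists T : int, k%:Z ^+ 2 + k%:Z = 2 * T.
  exists 'C(k.+1, 2); rewrite -[2]/(2%N%:Z) -PoszM -(mul_bin_diag k.+1 1) bin1.
  by rewrite PoszM intS; ring.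
rewrite mul1r /zc_seq modn2 N_odd.
have -> : u * (k%:Z ^+ 2 + 1%N%:Z * k%:Z + 2 * l * k%:Z) = 2 * (u * T + u * l * k%:Z).
  by rewrite mul1r k_triangle; ring.
apply/eq_xi_pow.
have -> : u * T + u * l * k%:Z - (h * u * k%:Z ^+ 2 + (h * u + u * l) * k%:Z)
          = - (u * T) * (2 * h - 1).
  by transitivity (u * T - h * u * (k%:Z ^+ 2 + k%:Z)); [ring | rewrite k_triangle; ring].
by rewrite two_h addrK dvdz_mull.
Qed.

Lemma ZC_chirp t : odd N -> is_ZC N t -> is_chirp t.
Proof.
move=> N_odd [u [l [u_coprime t_zc]]].
by apply: chirp_seq_eq (zc_seq_chirp l N_odd u_coprime) _ => k k_lt; rewrite t_zc.
Qed.

End XiPow.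

Section PermPoly.
Variables (p n : nat) (f2 f1 f0 : int).
Let N := (p ^ n)%N.
Local Notation q := (quad_val f2 f1 f0).

Hypothesis p_prime : prime p.
Hypothesis p_ge5 : (5 <= p)%N.
Hypothesis n_gt0 : (0 < n)%N.
Hypothesis q_perm : is_perm_poly N f2 f1 f0.
Hypothesis f2_ndvd : ~ (N%:Z %| f2)%Z.

Let N_gt0 : (0 < N)%N.
Proof. by rewrite expn_gt0 prime_gt0. Qed.

Let N_gt4 : (4 < N)%N.
Proof. by have := dvdn_leq N_gt0 (dvdn_exp n_gt0 (dvdnn p)); lia. Qed.

Lemma coprimez_prime_expn g : ~~ (p%:Z %| g)%Z -> coprimez g N%:Z.
Proof. by move=> p_ndvd; rewrite coprimezE coprimeXr // coprime_sym prime_coprime. Qed.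

Let coprimez_lt_p m : (0 < m < p)%N -> coprimez m%:Z N%:Z.
Proof. by move=> /andP[m_gt0 m_lt]; apply: coprimez_prime_expn; rewrite dvdzE gtnNdvd. Qed.

Lemma p_dvd_of_f2_mul g : (N%:Z %| f2 * g)%Z -> (p%:Z %| g)%Z.
Proof.
move=> N_dvd; apply/negPn/negP => /coprimez_prime_expn; rewrite coprimez_sym => g_coprime.
by apply: f2_ndvd; rewrite -(Gauss_dvdzl _ g_coprime).
Qed.

Lemma perm_poly_coef_ndvd : (p%:Z %| f2)%Z -> (p%:Z %| f1)%Z -> False.
Proof.
move=> p_f2 p_f1; have [_ q_surj] := q_perm.
have [j [_ qj]] := q_surj _ (zmodN_lt N_gt0 (f0 + 1)).
have N_dvd : (N%:Z %| q j - (f0 + 1))%Z.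
  by rewrite -eqz_mod_dvd; apply/eqP; rewrite -!zmodN_def ?N_gt0 // qj.
have p_dvd_N : (p%:Z %| N%:Z)%Z by rewrite dvdzE dvdn_exp.
have : (p%:Z %| (f2 * j%:Z ^+ 2 + f1 * j%:Z) - (q j - (f0 + 1)))%Z.
  apply: rpredB; last exact: dvdz_trans p_dvd_N N_dvd.
  by rewrite rpredD ?dvdz_mulr.
have -> : f2 * j%:Z ^+ 2 + f1 * j%:Z - (q j - (f0 + 1)) = 1 by rewrite /quad_val; ring.
by rewrite dvdz1 /=; lia.
Qed.

Lemma third_diff_ndvd a : coprimez a N%:Z ->
  (N%:Z %| 12 * a * f2 * (3 * f2 + f1))%Z ->
  (N%:Z %| 12 * a * f2 * (5 * f2 + f1))%Z -> False.
Proof.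
move=> a_coprime N_dvd3 N_dvd5.
have N_coprime2 : coprimez N%:Z 2 by rewrite coprimez_sym coprimez_lt_p //; lia.
have N_coprime12a : coprimez N%:Z (12 * a).
  rewrite coprimez_sym [12](_ : _ = 2 * 2 * 3) // !coprimezMl a_coprime.
  by rewrite -!(coprimez_sym N%:Z) N_coprime2 coprimez_sym coprimez_lt_p //; lia.
have N_f2f2 : (N%:Z %| f2 * f2)%Z.
  have : (N%:Z %| 12 * a * (2 * (f2 * f2)))%Z.
    have -> : 12 * a * (2 * (f2 * f2))
              = 12 * a * f2 * (5 * f2 + f1) - 12 * a * f2 * (3 * f2 + f1) by ring.
    exact: rpredB.
  by rewrite Gauss_dvdzr // (Gauss_dvdzr _ N_coprime2).
have N_f2f1 : (N%:Z %| f2 * f1)%Z.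
  have -> : f2 * f1 = f2 * (3 * f2 + f1) - 3 * (f2 * f2) by ring.
  apply: rpredB; last exact: dvdz_mull.
  by rewrite -(Gauss_dvdzr _ N_coprime12a) mulrA.
exact: perm_poly_coef_ndvd (p_dvd_of_f2_mul N_f2f2) (p_dvd_of_f2_mul N_f2f1).
Qed.

Variable R : realType.

Lemma quad_comp_phase_nonconst a b a' b' (c : R[i]) : coprimez a N%:Z ->
  ~ (forall k, (k < N)%N ->
       xi_pow R N (a * q k ^+ 2 + b * q k - (a' * k%:Z ^+ 2 + b' * k%:Z)) = c).
Proof.
move=> a_coprime phase_c; apply: (third_diff_ndvd a_coprime).
  have := const_xi_pow_diff3 (k := 0) N_gt0 _ phase_c.
  by rewrite diff3_quad_comp mulr0 add0r; apply; have := N_gt4; lia.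
have := const_xi_pow_diff3 (k := 1) N_gt0 _ phase_c.
by rewrite diff3_quad_comp mulr1; apply; have := N_gt4; lia.
Qed.

Lemma chirp_comp_quad (y : nat -> R[i]) :
  is_chirp N y -> ~ is_chirp N (fun k => y (zmodN N (q k))).
Proof.
move=> [c [a [b [c_neq0 a_coprime yE]]]] [c' [a' [b' [_ _ yqE]]]].
apply: (quad_comp_phase_nonconst (b := b) (a' := a') (b' := b') (c := c' / c)
          a_coprime) => k k_lt.
apply: xi_powB_eq c_neq0 _.
rewrite -(xi_pow_quad_congr R N_gt0 _ _ (dvdz_zmodN_sub N_gt0 (q k))).
by rewrite -yE ?zmodN_lt ?N_gt0 // yqE.
Qed.

Lemma chirp_comp_inv (y : nat -> R[i]) (sigma : nat -> nat) :
  (forall k, (k < N)%N -> (sigma k < N)%N /\ zmodN N (q (sigma k)) = k) ->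
  is_chirp N y -> ~ is_chirp N (fun k => y (sigma k)).
Proof.
move=> sigmaK [c [a [b [_ _ yE]]]] [c' [a' [b' [c'_neq0 a'_coprime ysE]]]].
have [q_inj _] := q_perm.
apply: (quad_comp_phase_nonconst (b := b') (a' := a) (b' := b) (c := c / c')
          a'_coprime) => j j_lt.
set k := zmodN N (q j).
have k_lt : (k < N)%N := zmodN_lt N_gt0 _.
have sigma_k : sigma k = j.
  have [sigma_k_lt q_sigma_k] := sigmaK k k_lt.
  by apply: q_inj sigma_k_lt j_lt _; rewrite q_sigma_k.
apply: xi_powB_eq c'_neq0 _.
rewrite -(xi_pow_quad_congr R N_gt0 _ _ (dvdz_zmodN_sub N_gt0 (q j))).
by rewrite -/k -ysE // sigma_k yE.
Qed.

End PermPoly.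

Theorem proposition3 (R : realType) (p n : nat) (u l f2 f1 f0 : int)
    (sigma : nat -> nat) :
  let N := (p ^ n)%N in
  prime p -> (5 <= p)%N -> (2 <= n)%N ->
  coprimez u N%:Z ->
  is_perm_poly N f2 f1 f0 ->
  zmodN N f2 <> 0%N ->
  (* sigma is the inverse permutation pi^{-1} of Z_N *)
  (forall k : nat, (k < N)%N ->
     (sigma k < N)%N /\ zmodN N (quad_val f2 f1 f0 (sigma k)) = k) ->
  let s := zc_seq R N u l in
  (forall t : nat -> R[i], is_ZC N t ->
     ~ in_class N t (fun k => s (zmodN N (quad_val f2 f1 f0 k)))) /\
  (forall t : nat -> R[i], is_ZC N t ->
     ~ in_class N t (fun k => s (sigma k))).
Proof.
move=> N p_prime p_ge5 n_ge2 u_coprime q_perm f2_neq0 sigmaK s.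
have n_gt0 : (0 < n)%N by lia.
have N_gt0 : (0 < N)%N by rewrite expn_gt0 prime_gt0.
have N_odd : odd N.
  rewrite oddX; case: (even_prime p_prime) => [p2 | ->]; last by rewrite orbT.
  by move: p_ge5; rewrite p2.
have f2_ndvd : ~ (N%:Z %| f2)%Z by move/zmodN_eq0.
have s_chirp : is_chirp N s := zc_seq_chirp R N_gt0 l N_odd u_coprime.
split=> t /(ZC_chirp N_gt0 N_odd) t_chirp /(in_class_chirp N_gt0 t_chirp).
  exact: (chirp_comp_quad p_prime p_ge5 n_gt0 q_perm f2_ndvd s_chirp).
exact: (chirp_comp_inv p_prime p_ge5 n_gt0 q_perm f2_ndvd sigmaK s_chirp).
Qed.
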